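(* For every fixed integer $k\ge 1$ there exists a constant $C_k$ such that the following holds: for every integer $d\ge k$ and every polynomial $P(x)=\sum_{n=0}^d a_nx^n$ with real coefficients and $\|P\|_{[-1,1]}\le 1$, the polynomial $P_{\ge k}(x)=\sum_{n=0}^{d-k}a_{n+k}x^n$ satisfies $$\|P_{\ge k}\|_{[-1,1]}\le C_k\, d^{k}\sqrt{d}.$$ (The paper states this as $\|P_{\ge k}\|_{[-1,1]}\le O\big(\tfrac{d^k}{k!}\sqrt{d/k}\big)$, in particular polynomial in $d$.)
   Context: For a function $f$ on $[-1,1]$, $\|f\|_{[-1,1]}:=\max_{x\in[-1,1]}|f(x)|$. The polynomial $P_{\ge k}$ is the ''high-order constituent polynomial'' of $P$, defined by the decomposition $P(x)=\sum_{n=0}^{k-1}a_nx^n+x^kP_{\ge k}(x)$. *)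

From Stdlib Require Import Reals.
Open Scope R_scope.

(* Polynomial of degree at most d with coefficient sequence a:
   P(x) = sum_{n=0}^{d} a_n x^n  (sum_f_R0 f d has d+1 terms). *)
Definition poly_eval (a : nat -> R) (d : nat) (x : R) : R :=
  sum_f_R0 (fun n => a n * x ^ n) d.

Definition high_part (a : nat -> R) (d k : nat) (x : R) : R :=
  poly_eval (fun n => a (n + k)%nat) (d - k) x.

Definition sup_norm_le (f : R -> R) (M : R) : Prop :=
  forall x, -1 <= x <= 1 -> Rabs (f x) <= M.

From Stdlib Require Import Reals Lra Lia.
Open Scope R_scope.

(* Expand P = sum_(m <= d) b_m T_m in Chebyshev polynomials.  Sampling P at the
   d+1 Chebyshev nodes and using the discrete orthogonality of cos (m theta)
   gives sum b_m^2 <= 2.  The high part of P is sum b_m (T_m)_{>=k}, and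
   (T_m)_{>=k} = O_k((m+1)^k) on [-1,1]: for |x| >= 1/2 one divides T_m minus
   its low part by x^k, while for |x| <= 1/2 the high parts of successive T_m
   satisfy the Chebyshev recurrence with a forcing term of size O(m^(k-1)),
   whose energy u^2 - 2xuv + v^2 grows by at most the forcing at each step.
   Cauchy-Schwarz then bounds |P_{>=k}| by sqrt 2 * O_k(d^k sqrt d). *)

Lemma nat_ind2 (P : nat -> Prop) :
  P 0%nat -> P 1%nat -> (forall m, P m -> P (S m) -> P (S (S m))) -> forall m, P m.
Proof.
  intros H0 H1 HS m. enough (P m /\ P (S m)) by tauto.
  induction m as [|m [Hm HSm]]; auto.
Qed.

Lemma Rabs_le_inv (x r : R) : Rabs x <= r -> - r <= x <= r.
Proof. unfold Rabs. destruct (Rcase_abs x); lra. Qed.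

Lemma sum_f_R0_single (f : nat -> R) (j N : nat) :
  (j <= N)%nat -> (forall i, (i <= N)%nat -> i <> j -> f i = 0) ->
  sum_f_R0 f N = f j.
Proof.
  induction N as [|N IH]; intros Hj Hf; simpl.
  - now replace j with 0%nat by lia.
  - destruct (Nat.eq_dec j (S N)) as [->|Hne].
    + rewrite sum_eq_R0; [ring|]. intros i Hi. apply Hf; lia.
    + rewrite IH, (Hf (S N)); [ring|lia|lia|lia|]. intros i Hi Hij. apply Hf; lia.
Qed.

Lemma sum_f_R0_stable (f : nat -> R) (N M : nat) :
  (N <= M)%nat -> (forall i, (N < i)%nat -> f i = 0) ->
  sum_f_R0 f M = sum_f_R0 f N.
Proof.
  intros HNM Hf. induction HNM as [|M HNM IH]; [reflexivity|].
  simpl. rewrite IH, (Hf (S M)) by lia. ring.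
Qed.

Lemma sum_f_R0_swap (f : nat -> nat -> R) (n m : nat) :
  sum_f_R0 (fun i => sum_f_R0 (fun j => f i j) m) n =
  sum_f_R0 (fun j => sum_f_R0 (fun i => f i j) n) m.
Proof.
  induction n as [|n IH]; simpl; [reflexivity|].
  rewrite IH, <- sum_plus. reflexivity.
Qed.

Lemma sum_f_R0_telescope (g : nat -> R) (n : nat) :
  sum_f_R0 (fun j => g (S j) - g j) n = g (S n) - g 0%nat.
Proof. induction n as [|n IH]; simpl; [ring|]. rewrite IH. ring. Qed.

Lemma sum_f_R0_sqr (f : nat -> R) (N : nat) :
  sum_f_R0 f N ^ 2 = sum_f_R0 (fun i => sum_f_R0 (fun j => f i * f j) N) N.
Proof.
  rewrite <- Rsqr_pow2. unfold Rsqr. rewrite scal_sum. apply sum_eq. intros i _.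
  rewrite scal_sum. apply sum_eq. intros j _. ring.
Qed.

(* Cauchy-Schwarz, via the termwise AM-GM [2AB u v <= B^2 u^2 + A^2 v^2]. *)
Lemma sum_f_R0_mul_le (u v : nat -> R) (N : nat) (A B : R) :
  0 < A -> 0 < B ->
  sum_f_R0 (fun i => u i ^ 2) N <= A ^ 2 -> sum_f_R0 (fun i => v i ^ 2) N <= B ^ 2 ->
  sum_f_R0 (fun i => u i * v i) N <= A * B.
Proof.
  intros HA HB Hu Hv.
  apply Rle_trans with (sum_f_R0 (fun i => u i ^ 2 * (B / (2 * A)) + v i ^ 2 * (A / (2 * B))) N).
  - apply sum_Rle. intros i _.
    apply Rmult_le_reg_l with (2 * A * B); [nra|].
    replace (2 * A * B * (u i ^ 2 * (B / (2 * A)) + v i ^ 2 * (A / (2 * B))))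
      with ((B * u i) ^ 2 + (A * v i) ^ 2) by (field; lra).
    pose proof (pow2_ge_0 (B * u i - A * v i)). nra.
  - rewrite sum_plus, <- !scal_sum.
    assert (B / (2 * A) * sum_f_R0 (fun i => u i ^ 2) N <= B / (2 * A) * A ^ 2)
      by (apply Rmult_le_compat_l; [apply Rlt_le, Rdiv_lt_0_compat; lra | exact Hu]).
    assert (A / (2 * B) * sum_f_R0 (fun i => v i ^ 2) N <= A / (2 * B) * B ^ 2)
      by (apply Rmult_le_compat_l; [apply Rlt_le, Rdiv_lt_0_compat; lra | exact Hv]).
    replace (A * B) with (B / (2 * A) * A ^ 2 + A / (2 * B) * B ^ 2) by (field; lra).
    lra.
Qed.

Lemma poly_eval_ext (a b : nat -> R) (L : nat) (x : R) :
  (forall n, (n <= L)%nat -> a n = b n) -> poly_eval a L x = poly_eval b L x.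
Proof. intros H. apply sum_eq. intros n Hn. now rewrite H. Qed.

Lemma poly_eval_succ (a : nat -> R) (L : nat) (x : R) :
  poly_eval a (S L) x = a 0%nat + x * poly_eval (fun n => a (S n)) L x.
Proof.
  unfold poly_eval. induction L as [|L IH]; [simpl; ring|].
  rewrite tech5, IH, (tech5 (fun n => a (S n) * x ^ n)). simpl. ring.
Qed.

Lemma poly_eval_sub (a b : nat -> R) (c : R) (L : nat) (x : R) :
  poly_eval (fun n => c * a n - b n) L x = c * poly_eval a L x - poly_eval b L x.
Proof. unfold poly_eval. rewrite scal_sum, <- minus_sum. apply sum_eq. intros; ring. Qed.

Lemma poly_eval_stable (a : nat -> R) (N L : nat) (x : R) :
  (N <= L)%nat -> (forall n, (N < n)%nat -> a n = 0) ->
  poly_eval a L x = poly_eval a N x.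
Proof.
  intros HL Ha. apply sum_f_R0_stable; [exact HL|].
  intros n Hn. rewrite Ha by exact Hn. ring.
Qed.

Lemma poly_eval_lincomb (a b : nat -> R) (t : nat -> nat -> R) (L M : nat) (x : R) :
  (forall n, (n <= L)%nat -> a n = sum_f_R0 (fun m => b m * t m n) M) ->
  poly_eval a L x = sum_f_R0 (fun m => b m * poly_eval (t m) L x) M.
Proof.
  intros Ha. unfold poly_eval.
  rewrite (sum_eq _ (fun n => sum_f_R0 (fun m => b m * t m n * x ^ n) M)).
  - rewrite sum_f_R0_swap. apply sum_eq. intros m _.
    rewrite scal_sum. apply sum_eq. intros; ring.
  - intros n Hn. rewrite Ha, Rmult_comm, scal_sum by exact Hn.
    apply sum_eq. intros; ring.
Qed.

Lemma poly_eval_split (a : nat -> R) (L k : nat) (x : R) :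
  poly_eval a (L + S k) x =
  poly_eval a k x + x ^ S k * poly_eval (fun n => a (n + S k)%nat) L x.
Proof.
  induction L as [|L IH]; [unfold poly_eval; simpl; ring|].
  unfold poly_eval in *. rewrite Nat.add_succ_l, !tech5, IH.
  replace (S (L + S k)) with (S L + S k)%nat by lia. rewrite pow_add. ring.
Qed.

Lemma poly_eval_split_high (a : nat -> R) (d k : nat) (x : R) :
  (S k <= d)%nat ->
  poly_eval a d x = poly_eval a k x + x ^ S k * high_part a d (S k) x.
Proof.
  intros Hd. unfold high_part.
  replace d with (d - S k + S k)%nat at 1 by lia. apply poly_eval_split.
Qed.

Lemma high_part_stable (a : nat -> R) (N d d' k : nat) (x : R) :
  (forall n, (N < n)%nat -> a n = 0) -> (N <= d)%nat -> (N <= d')%nat ->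
  high_part a d k x = high_part a d' k x.
Proof.
  intros Ha Hd Hd'. unfold high_part.
  assert (Hs : forall n, (N - k < n)%nat -> a (n + k)%nat = 0) by (intros n Hn; apply Ha; lia).
  rewrite (poly_eval_stable _ (N - k) (d - k)), (poly_eval_stable _ (N - k) (d' - k));
    auto; lia.
Qed.

Lemma high_part_lincomb (a b : nat -> R) (t : nat -> nat -> R) (d k : nat) (x : R) :
  (k <= d)%nat ->
  (forall n, (n <= d)%nat -> a n = sum_f_R0 (fun m => b m * t m n) d) ->
  high_part a d k x = sum_f_R0 (fun m => b m * high_part (t m) d k x) d.
Proof.
  intros Hk Ha. apply (poly_eval_lincomb _ b (fun m n => t m (n + k)%nat)).
  intros n Hn. apply Ha. lia.
Qed.

(** * Chebyshev polynomials *)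

Definition unit_coef (n : nat) : R := if Nat.eqb n 0 then 1 else 0.

Definition mulX (a : nat -> R) (n : nat) : R :=
  match n with 0%nat => 0 | S n' => a n' end.

Lemma mulX_S (a : nat -> R) (n : nat) : mulX a (S n) = a n.
Proof. reflexivity. Qed.

(* [cheb m n] is the coefficient of [x^n] in the Chebyshev polynomial [T_m]. *)
Fixpoint cheb (m : nat) : nat -> R :=
  match m with
  | 0%nat => unit_coef
  | 1%nat => mulX unit_coef
  | S ((S m'') as m') => fun n => 2 * mulX (cheb m') n - cheb m'' n
  end.

Lemma cheb_SS (m n : nat) : cheb (S (S m)) n = 2 * mulX (cheb (S m)) n - cheb m n.
Proof. reflexivity. Qed.

Lemma poly_eval_mulX (a : nat -> R) (L : nat) (x : R) :
  poly_eval (mulX a) (S L) x = x * poly_eval a L x.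
Proof. rewrite poly_eval_succ. simpl mulX. apply Rplus_0_l. Qed.

Lemma cheb_support (m n : nat) : (m < n)%nat -> cheb m n = 0.
Proof.
  revert n. induction m using nat_ind2; intros n Hn.
  - destruct n; [lia|reflexivity].
  - destruct n as [|[|n]]; [lia|lia|reflexivity].
  - rewrite cheb_SS. destruct n as [|n]; [lia|].
    rewrite mulX_S, IHm, IHm0 by lia. ring.
Qed.

Lemma cheb_lead (m : nat) : cheb (S m) (S m) = 2 ^ m.
Proof.
  induction m as [|m IH]; [reflexivity|].
  rewrite cheb_SS, mulX_S, IH, cheb_support by lia. simpl. ring.
Qed.

Lemma cheb_diag_neq0 (m : nat) : cheb m m <> 0.
Proof.
  destruct m as [|m]; [change (cheb 0 0) with 1; lra|].
  rewrite cheb_lead. apply pow_nonzero. lra.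
Qed.

Lemma cheb_coef_bound (m n : nat) : Rabs (cheb m n) <= INR (S m) ^ n.
Proof.
  revert n. induction m using nat_ind2; intros n.
  - change (cheb 0 n) with (unit_coef n). unfold unit_coef. rewrite pow1.
    destruct (n =? 0); [rewrite Rabs_R1 | rewrite Rabs_R0]; lra.
  - assert (1 <= INR 2 ^ n) by (apply pow_R1_Rle; simpl; lra).
    destruct n as [|n]; [change (cheb 1 0) with 0; rewrite Rabs_R0; lra|].
    change (cheb 1 (S n)) with (unit_coef n). unfold unit_coef.
    destruct (n =? 0); [rewrite Rabs_R1 | rewrite Rabs_R0]; lra.
  - rewrite cheb_SS. destruct n as [|n]; [change (mulX (cheb (S m)) 0) with 0 | rewrite mulX_S].
    + rewrite Rmult_0_r, Rminus_0_l, Rabs_Ropp. apply IHm.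
    + rewrite !S_INR in *. set (a := INR m) in *.
      assert (0 <= a) by apply pos_INR.
      specialize (IHm (S n)). specialize (IHm0 n). simpl in IHm.
      assert ((a + 1 + 1) ^ n <= (a + 1 + 1 + 1) ^ n) by (apply pow_incr; lra).
      assert ((a + 1) * (a + 1) ^ n <= (a + 1) * (a + 1 + 1 + 1) ^ n)
        by (apply Rmult_le_compat_l; [lra | apply pow_incr; lra]).
      eapply Rle_trans; [apply Rabs_triang|].
      rewrite Rabs_Ropp, Rabs_mult, (Rabs_right 2) by lra. cbn [pow]. lra.
Qed.

Lemma poly_eval_cheb_stable (m L : nat) (x : R) :
  (m <= L)%nat -> poly_eval (cheb m) L x = poly_eval (cheb m) m x.
Proof. intros HL. apply poly_eval_stable; [exact HL|]. apply cheb_support. Qed.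

Lemma poly_eval_cheb_cos (m L : nat) (t : R) :
  (m <= L)%nat -> poly_eval (cheb m) L (cos t) = cos (INR m * t).
Proof.
  revert L. induction m using nat_ind2; intros L HL.
  - rewrite poly_eval_cheb_stable by exact HL.
    change (poly_eval (cheb 0) 0 (cos t)) with (1 * 1).
    rewrite Rmult_0_l, cos_0. ring.
  - rewrite poly_eval_cheb_stable by exact HL.
    change (poly_eval (cheb 1) 1 (cos t)) with (0 * 1 + 1 * (cos t * 1)).
    change (INR 1) with 1. rewrite (Rmult_1_l t). ring.
  - destruct L as [|L]; [lia|].
    rewrite (poly_eval_ext _ (fun n => 2 * mulX (cheb (S m)) n - cheb m n))
      by (intros; apply cheb_SS).
    rewrite poly_eval_sub, poly_eval_mulX, IHm0, IHm by lia.
    replace (INR (S (S m)) * t) with (INR (S m) * t + t) by (rewrite !S_INR; ring).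
    replace (INR m * t) with (INR (S m) * t - t) by (rewrite !S_INR; ring).
    rewrite cos_plus, cos_minus. ring.
Qed.

Lemma poly_eval_cheb_bound (m L : nat) (x : R) :
  (m <= L)%nat -> -1 <= x <= 1 -> Rabs (poly_eval (cheb m) L x) <= 1.
Proof.
  intros HL Hx. rewrite <- (cos_acos x Hx), poly_eval_cheb_cos by exact HL.
  apply Rabs_le, COS_bound.
Qed.

Lemma triangular_span (t : nat -> nat -> R) :
  (forall m n, (m < n)%nat -> t m n = 0) -> (forall m, t m m <> 0) ->
  forall (a : nat -> R) (d : nat), exists b : nat -> R,
    forall n, (n <= d)%nat -> a n = sum_f_R0 (fun m => b m * t m n) d.
Proof.
  intros Ht Hdiag a d. revert a. induction d as [|d IH]; intros a.
  - exists (fun _ => a 0%nat / t 0%nat 0%nat). intros n Hn.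
    replace n with 0%nat by lia. simpl. field. apply Hdiag.
  - set (beta := a (S d) / t (S d) (S d)).
    destruct (IH (fun n => a n - beta * t (S d) n)) as [b Hb].
    exists (fun m => if Nat.eqb m (S d) then beta else b m). intros n Hn.
    rewrite tech5, Nat.eqb_refl, (sum_eq _ (fun m => b m * t m n)).
    2:{ intros m Hm. destruct (Nat.eqb_spec m (S d)); [lia|reflexivity]. }
    destruct (Nat.eq_dec n (S d)) as [->|Hne].
    + rewrite sum_eq_R0 by (intros m Hm; rewrite Ht by lia; ring).
      unfold beta. field. apply Hdiag.
    + rewrite <- Hb by lia. ring.
Qed.

Lemma cheb_expansion (a : nat -> R) (d : nat) : exists b : nat -> R,
  forall n, (n <= d)%nat -> a n = sum_f_R0 (fun m => b m * cheb m n) d.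
Proof. exact (triangular_span cheb cheb_support cheb_diag_neq0 a d). Qed.

(** * High parts of Chebyshev polynomials *)

Lemma high_part_cheb_stable (m d k : nat) (x : R) :
  (m <= d)%nat -> high_part (cheb m) d k x = high_part (cheb m) m k x.
Proof. intros Hd. apply (high_part_stable _ m); [apply cheb_support | lia | lia]. Qed.

Lemma poly_eval_cheb_low_bound (m k : nat) (x : R) :
  Rabs x <= 1 -> Rabs (poly_eval (cheb m) k x) <= INR (S k) * INR (S m) ^ k.
Proof.
  intros Hx. eapply Rle_trans; [apply sum_f_R0_triangle|].
  rewrite Rmult_comm, <- sum_cte. apply sum_Rle. intros n Hn.
  rewrite Rabs_mult, <- RPow_abs.
  assert (Hm : 1 <= INR (S m)) by (rewrite S_INR; pose proof (pos_INR m); lra).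
  assert (Rabs x ^ n <= 1) by (rewrite <- (pow1 n); apply pow_incr; split; [apply Rabs_pos | exact Hx]).
  assert (INR (S m) ^ n <= INR (S m) ^ k) by (apply Rle_pow; [exact Hm | exact Hn]).
  pose proof (cheb_coef_bound m n). pose proof (Rabs_pos (cheb m n)).
  pose proof (pow_le (Rabs x) n (Rabs_pos x)).
  nra.
Qed.

(* Away from 0 we may divide [T_m = low part + x^(k+1) * high part] by [x^(k+1)]. *)
Lemma cheb_high_bound_far (m k : nat) (x : R) :
  / 2 <= Rabs x <= 1 ->
  Rabs (high_part (cheb m) m (S k) x) <= 2 ^ S k * (1 + INR (S k) * INR (S m) ^ k).
Proof.
  intros Hx.
  set (h := high_part (cheb m) m (S k) x).
  set (B := 1 + INR (S k) * INR (S m) ^ k).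
  assert (Hsplit := poly_eval_split_high (cheb m) (m + S k) k x ltac:(lia)).
  rewrite (high_part_cheb_stable m (m + S k)) in Hsplit by lia. fold h in Hsplit.
  assert (Hxh : Rabs x ^ S k * Rabs h <= B).
  { rewrite RPow_abs, <- Rabs_mult.
    replace (x ^ S k * h) with (poly_eval (cheb m) (m + S k) x - poly_eval (cheb m) k x) by lra.
    eapply Rle_trans; [apply Rabs_triang|]. rewrite Rabs_Ropp. unfold B.
    pose proof (poly_eval_cheb_bound m (m + S k) x ltac:(lia) (Rabs_le_inv x 1 ltac:(lra))).
    pose proof (poly_eval_cheb_low_bound m k x ltac:(lra)).
    lra. }
  assert (Hpow : (/ 2) ^ S k <= Rabs x ^ S k) by (apply pow_incr; lra).
  assert (Hhalf : 2 ^ S k * (/ 2) ^ S k = 1)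
    by (rewrite <- Rpow_mult_distr, Rinv_r, pow1 by lra; reflexivity).
  pose proof (Rabs_pos h). pose proof (pow_lt 2 (S k) ltac:(lra)).
  assert (Rabs h * (/ 2) ^ S k <= B) by nra.
  replace (Rabs h) with (2 ^ S k * (Rabs h * (/ 2) ^ S k))
    by (transitivity (Rabs h * (2 ^ S k * (/ 2) ^ S k)); [ring | rewrite Hhalf; ring]).
  apply Rmult_le_compat_l; lra.
Qed.

Lemma high_part_cheb_rec (j k : nat) (x : R) :
  high_part (cheb (S (S j))) (S (S j)) (S k) x =
  2 * x * high_part (cheb (S j)) (S j) (S k) x - high_part (cheb j) j (S k) x
  + 2 * cheb (S j) k.
Proof.
  rewrite <- (high_part_cheb_stable (S (S j)) (S (S j) + S k)),
    <- (high_part_cheb_stable (S j) (S j + S k)),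
    <- (high_part_cheb_stable j (S (S j) + S k)) by lia.
  unfold high_part. rewrite !Nat.add_sub.
  rewrite (poly_eval_ext _ (fun n => 2 * mulX (cheb (S j)) (n + S k) - cheb j (n + S k)))
    by (intros; apply cheb_SS).
  rewrite poly_eval_sub, poly_eval_succ.
  change (fun n => mulX (cheb (S j)) (S n + S k)) with (fun n => cheb (S j) (n + S k)).
  rewrite Nat.add_0_l, mulX_S. ring.
Qed.

(* [u^2 - 2xuv + v^2] is invariant under [(u, v) -> (2xu - v, u)]. *)
Definition cheb_energy (x u v : R) : R := u ^ 2 - 2 * x * u * v + v ^ 2.

Lemma cheb_energy_step (x u v f B : R) :
  x ^ 2 <= 1 -> 0 <= B -> cheb_energy x u v <= B ^ 2 ->
  cheb_energy x (2 * x * u - v + f) u <= (B + Rabs f) ^ 2.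
Proof.
  unfold cheb_energy. intros Hx HB HE.
  assert (Hxuv : (x * u - v) ^ 2 <= B ^ 2) by nra.
  assert (Habs : Rabs (x * u - v) <= B).
  { rewrite <- (Rabs_right B) by lra. apply Rsqr_le_abs_0. rewrite !Rsqr_pow2. exact Hxuv. }
  assert (f * (x * u - v) <= Rabs f * B).
  { eapply Rle_trans; [apply Rle_abs|]. rewrite Rabs_mult.
    apply Rmult_le_compat_l; [apply Rabs_pos | exact Habs]. }
  replace ((2 * x * u - v + f) ^ 2 - 2 * x * (2 * x * u - v + f) * u + u ^ 2)
    with ((u ^ 2 - 2 * x * u * v + v ^ 2) + 2 * (f * (x * u - v)) + f ^ 2) by ring.
  rewrite <- (pow2_abs f). nra.
Qed.

Lemma cheb_energy_lower (x u v : R) :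
  Rabs x <= / 2 -> 3 / 4 * v ^ 2 <= cheb_energy x u v.
Proof.
  unfold cheb_energy. intros Hx.
  assert (Rabs (2 * x * u * v) <= Rabs u * Rabs v).
  { rewrite !Rabs_mult, (Rabs_right 2) by lra.
    assert (0 <= Rabs u * Rabs v) by (apply Rmult_le_pos; apply Rabs_pos). nra. }
  pose proof (Rle_abs (2 * x * u * v)).
  pose proof (pow2_ge_0 (Rabs u - Rabs v / 2)).
  rewrite <- (pow2_abs u), <- (pow2_abs v). nra.
Qed.

Lemma cheb_rec_energy_bound (x : R) (y f G : nat -> R) :
  x ^ 2 <= 1 ->
  (forall j, y (S (S j)) = 2 * x * y (S j) - y j + f j) ->
  (forall j, 0 <= G j) -> (forall j, G j + Rabs (f j) <= G (S j)) ->
  cheb_energy x (y 1%nat) (y 0%nat) <= G 0%nat ^ 2 ->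
  forall j, cheb_energy x (y (S j)) (y j) <= G j ^ 2.
Proof.
  intros Hx Hrec HG HGS H0 j. induction j as [|j IH]; [exact H0|].
  rewrite Hrec. eapply Rle_trans; [apply (cheb_energy_step _ _ _ _ (G j)); auto|].
  apply pow_incr. pose proof (Rabs_pos (f j)). pose proof (HG j). pose proof (HGS j). lra.
Qed.

(* Near 0 the high parts obey the Chebyshev recurrence forced by [2 cheb (j+1) k]. *)
Lemma cheb_high_bound_near (m k : nat) (x : R) :
  Rabs x <= / 2 ->
  Rabs (high_part (cheb m) m (S k) x) <= 3 * INR (S m) ^ S k.
Proof.
  intros Hx.
  set (y := fun j => high_part (cheb j) j (S k) x).
  set (G := fun j => 2 * INR (S j) ^ S k).
  assert (HG : forall j, 0 <= G j) by (intros j; unfold G; pose proof (pow_le (INR (S j)) (S k) (pos_INR _)); lra).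
  assert (Hx2 : x ^ 2 <= 1) by (rewrite <- pow2_abs; pose proof (Rabs_pos x); nra).
  assert (HGS : forall j, G j + Rabs (2 * cheb (S j) k) <= G (S j)).
  { intros j. unfold G. rewrite Rabs_mult, (Rabs_right 2) by lra.
    pose proof (cheb_coef_bound (S j) k).
    rewrite S_INR with (n := S j) in *. set (a := INR (S j)) in *.
    assert (0 <= a) by apply pos_INR.
    assert (a * a ^ k <= a * (a + 1) ^ k)
      by (apply Rmult_le_compat_l; [lra | apply pow_incr; lra]).
    cbn [pow]. lra. }
  assert (Hy0 : y 0%nat = 0) by (unfold y, high_part, poly_eval; simpl; unfold unit_coef; simpl; ring).
  assert (Hy1 : Rabs (y 1%nat) <= 1).
  { unfold y, high_part, poly_eval. simpl. unfold unit_coef.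
    destruct (k =? 0); [rewrite Rmult_1_r, Rabs_R1 | rewrite Rmult_0_l, Rabs_R0]; lra. }
  assert (HE0 : cheb_energy x (y 1%nat) (y 0%nat) <= G 0%nat ^ 2).
  { unfold cheb_energy, G. rewrite Hy0. change (INR 1) with 1.
    rewrite pow1, <- (pow2_abs (y 1%nat)). pose proof (Rabs_pos (y 1%nat)). nra. }
  pose proof (cheb_rec_energy_bound x y (fun j => 2 * cheb (S j) k) G Hx2
                (fun j => high_part_cheb_rec j k x) HG HGS HE0 m) as Henergy.
  pose proof (cheb_energy_lower x (y (S m)) (y m) Hx).
  change (high_part (cheb m) m (S k) x) with (y m).
  unfold G in Henergy. set (W := INR (S m) ^ S k) in *.
  assert (0 <= W) by (apply pow_le, pos_INR).
  rewrite <- (Rabs_right (3 * W)) by lra. apply Rsqr_le_abs_0.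
  rewrite !Rsqr_pow2. nra.
Qed.

Lemma cheb_high_bound (m k : nat) (x : R) :
  Rabs x <= 1 ->
  Rabs (high_part (cheb m) m (S k) x) <= 2 ^ S k * INR (S (S k)) * INR (S m) ^ S k.
Proof.
  intros Hx.
  assert (Hm : 1 <= INR (S m)) by (rewrite S_INR; pose proof (pos_INR m); lra).
  assert (HW1 : 1 <= INR (S m) ^ S k) by (apply pow_R1_Rle; exact Hm).
  assert (HWk : INR (S m) ^ k <= INR (S m) ^ S k) by (apply Rle_pow; [exact Hm | lia]).
  assert (H2 : 2 <= 2 ^ S k) by (simpl; pose proof (pow_R1_Rle 2 k ltac:(lra)); lra).
  assert (Hk : INR (S (S k)) = INR (S k) + 1) by apply S_INR.
  assert (1 <= INR (S k)) by (rewrite S_INR; pose proof (pos_INR k); lra).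
  destruct (Rle_lt_dec (Rabs x) (/ 2)) as [Hnear | Hfar].
  - eapply Rle_trans; [apply cheb_high_bound_near; exact Hnear|].
    apply Rmult_le_compat_r; [lra | nra].
  - eapply Rle_trans; [apply cheb_high_bound_far; lra|].
    rewrite Rmult_assoc. apply Rmult_le_compat_l; [lra|].
    assert (INR (S k) * INR (S m) ^ k <= INR (S k) * INR (S m) ^ S k)
      by (apply Rmult_le_compat_l; lra).
    rewrite Hk. lra.
Qed.

(** * Discrete orthogonality at the Chebyshev nodes *)

(* [cos (cheb_angle d j)], [j <= d], are the zeros of [T_(d+1)]. *)
Definition cheb_angle (d j : nat) : R := (2 * INR j + 1) * PI / (2 * INR (S d)).

(* Multiplying by [2 sin b], with [b = p pi / (2(d+1))], makes the sum telescope. *)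
Lemma sum_cos_cheb_angle (d p : nat) :
  (0 < p < 2 * S d)%nat -> sum_f_R0 (fun j => cos (INR p * cheb_angle d j)) d = 0.
Proof.
  intros Hp. set (N := INR (S d)).
  assert (HN : 0 < N) by (apply lt_0_INR; lia).
  set (b := INR p * PI / (2 * N)).
  assert (Hb : 0 < b < PI).
  { pose proof PI_RGT_0. assert (0 < INR p) by (apply lt_0_INR; lia).
    assert (INR p < 2 * N).
    { replace (2 * N) with (INR (2 * S d)) by (unfold N; rewrite mult_INR; change (INR 2) with (1 + 1); ring).
      apply lt_INR. lia. }
    unfold b. split.
    - apply Rdiv_lt_0_compat; nra.
    - apply Rmult_lt_reg_r with (2 * N); [lra|]. field_simplify; nra. }
  assert (Hsin : 0 < sin b) by (apply sin_gt_0; apply Hb).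
  apply Rmult_eq_reg_l with (2 * sin b); [|lra].
  rewrite Rmult_0_r, scal_sum.
  rewrite (sum_eq _ (fun j => sin (2 * INR (S j) * b) - sin (2 * INR j * b))).
  - rewrite (sum_f_R0_telescope (fun j => sin (2 * INR j * b))).
    replace (2 * INR (S d) * b) with (INR p * PI) by (unfold b; fold N; field; lra).
    rewrite sin_eq_0_1 by (exists (Z.of_nat p); rewrite <- INR_IZR_INZ; reflexivity).
    simpl INR. rewrite Rmult_0_r, Rmult_0_l, sin_0. ring.
  - intros j _. rewrite S_INR.
    replace (INR p * cheb_angle d j) with ((2 * INR j + 1) * b)
      by (unfold cheb_angle, b; fold N; field; lra).
    replace (2 * (INR j + 1) * b) with ((2 * INR j + 1) * b + b) by ring.
    replace (2 * INR j * b) with ((2 * INR j + 1) * b - b) by ring.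
    rewrite sin_plus, sin_minus. ring.
Qed.

Lemma cos_mul_cos_nat (m m' : nat) (t : R) :
  (m' <= m)%nat ->
  cos (INR m * t) * cos (INR m' * t) = (cos (INR (m + m') * t) + cos (INR (m - m') * t)) / 2.
Proof.
  intros Hm. rewrite plus_INR, minus_INR by exact Hm.
  replace ((INR m + INR m') * t) with (INR m * t + INR m' * t) by ring.
  replace ((INR m - INR m') * t) with (INR m * t - INR m' * t) by ring.
  rewrite cos_plus, cos_minus. field.
Qed.

Lemma sum_cos_cheb_angle_orth (d m m' : nat) :
  (m' < m <= d)%nat ->
  sum_f_R0 (fun j => cos (INR m * cheb_angle d j) * cos (INR m' * cheb_angle d j)) d = 0.
Proof.
  intros Hm.
  rewrite (sum_eq _ (fun j => cos (INR (m + m') * cheb_angle d j) * / 2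
                              + cos (INR (m - m') * cheb_angle d j) * / 2))
    by (intros; rewrite cos_mul_cos_nat by lia; field).
  rewrite sum_plus, <- !scal_sum, !sum_cos_cheb_angle by lia. ring.
Qed.

Lemma sum_cos_cheb_angle_sqr (d m : nat) :
  (m <= d)%nat -> INR (S d) / 2 <= sum_f_R0 (fun j => cos (INR m * cheb_angle d j) ^ 2) d.
Proof.
  intros Hm. assert (HN : 0 < INR (S d)) by (apply lt_0_INR; lia).
  destruct m as [|m].
  - rewrite (sum_eq _ (fun _ => 1)) by (intros; simpl INR; rewrite Rmult_0_l, cos_0; ring).
    rewrite sum_cte. lra.
  - rewrite (sum_eq _ (fun j => cos (INR (S m + S m) * cheb_angle d j) * / 2 + / 2)).
    + rewrite sum_plus, <- scal_sum, sum_cos_cheb_angle, sum_cte by lia. lra.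
    + intros j _. rewrite <- Rsqr_pow2. unfold Rsqr.
      rewrite cos_mul_cos_nat, Nat.sub_diag by lia. simpl INR at 2.
      rewrite Rmult_0_l, cos_0. field.
Qed.

(* Discrete Parseval identity at the nodes. *)
Lemma sum_sqr_le_of_cheb_angle (d : nat) (b : nat -> R) :
  (forall j, (j <= d)%nat ->
     Rabs (sum_f_R0 (fun m => b m * cos (INR m * cheb_angle d j)) d) <= 1) ->
  sum_f_R0 (fun m => b m ^ 2) d <= 2.
Proof.
  intros Hb. set (c := fun m j => cos (INR m * cheb_angle d j)).
  assert (HN : 0 < INR (S d)) by (apply lt_0_INR; lia).
  assert (Horth : forall m m', (m <= d)%nat -> (m' <= d)%nat -> m' <> m ->
            sum_f_R0 (fun j => c m j * c m' j) d = 0).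
  { intros m m' Hm Hm' Hne. unfold c. destruct (Nat.lt_gt_cases m' m) as [[Hlt|Hgt] _]; [exact Hne| |].
    - apply sum_cos_cheb_angle_orth. lia.
    - rewrite <- (sum_cos_cheb_angle_orth d m' m) by lia. apply sum_eq. intros; ring. }
  assert (Hsum : sum_f_R0 (fun j => sum_f_R0 (fun m => b m * c m j) d ^ 2) d <= INR (S d)).
  { rewrite <- (Rmult_1_l (INR (S d))), <- sum_cte. apply sum_Rle. intros j Hj.
    rewrite <- pow2_abs. specialize (Hb j Hj).
    change (Rabs (sum_f_R0 (fun m => b m * c m j) d) <= 1) in Hb.
    pose proof (Rabs_pos (sum_f_R0 (fun m => b m * c m j) d)). nra. }
  assert (Hexpand : sum_f_R0 (fun j => sum_f_R0 (fun m => b m * c m j) d ^ 2) d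
                    = sum_f_R0 (fun m => b m ^ 2 * sum_f_R0 (fun j => c m j ^ 2) d) d).
  { rewrite (sum_eq _ (fun j => sum_f_R0 (fun m => sum_f_R0
                        (fun m' => b m * c m j * (b m' * c m' j)) d) d))
      by (intros; apply sum_f_R0_sqr).
    rewrite sum_f_R0_swap. apply sum_eq. intros m Hm.
    rewrite sum_f_R0_swap, (sum_f_R0_single _ m) by (try exact Hm; intros m' Hm' Hne;
      rewrite (sum_eq _ (fun j => c m j * c m' j * (b m * b m'))) by (intros; ring);
      rewrite <- scal_sum, Horth by assumption; ring).
    rewrite scal_sum. apply sum_eq. intros; ring. }
  assert (Hlower : INR (S d) / 2 * sum_f_R0 (fun m => b m ^ 2) d
                   <= sum_f_R0 (fun m => b m ^ 2 * sum_f_R0 (fun j => c m j ^ 2) d) d).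
  { rewrite scal_sum. apply sum_Rle. intros m Hm.
    apply Rmult_le_compat_l; [apply pow2_ge_0 | apply sum_cos_cheb_angle_sqr; exact Hm]. }
  nra.
Qed.

Lemma sum_sqr_pow_succ_le (c : R) (d n : nat) :
  sum_f_R0 (fun m => (c * INR (S m) ^ n) ^ 2) d
  <= (c * INR (S d) ^ n * sqrt (INR (S d))) ^ 2.
Proof.
  assert (HN : 0 <= INR (S d)) by apply pos_INR.
  replace ((c * INR (S d) ^ n * sqrt (INR (S d))) ^ 2)
    with ((c * INR (S d) ^ n) ^ 2 * INR (S d))
    by (rewrite !Rpow_mult_distr, pow2_sqrt by exact HN; ring).
  rewrite <- sum_cte. apply sum_Rle. intros m Hm.
  rewrite !Rpow_mult_distr. apply Rmult_le_compat_l; [apply pow2_ge_0|].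
  apply pow_incr. split; [apply pow_le, pos_INR|].
  apply pow_incr. split; [apply pos_INR | apply le_INR; lia].
Qed.

Lemma sqrt2_succ_pow_le (d n : nat) :
  (1 <= d)%nat ->
  sqrt 2 * (INR (S d) ^ n * sqrt (INR (S d))) <= 2 * 2 ^ n * (INR d ^ n * sqrt (INR d)).
Proof.
  intros Hd. assert (1 <= INR d) by (apply (le_INR 1); exact Hd).
  assert (Hpow : INR (S d) ^ n <= 2 ^ n * INR d ^ n).
  { rewrite <- Rpow_mult_distr. apply pow_incr. rewrite S_INR. pose proof (pos_INR d). lra. }
  assert (Hsqrt : sqrt 2 * sqrt (INR (S d)) <= 2 * sqrt (INR d)).
  { rewrite <- sqrt_mult_alt by lra.
    replace (2 * sqrt (INR d)) with (sqrt (4 * INR d))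
      by (rewrite sqrt_mult_alt, <- (sqrt_square 2) by lra; f_equal; ring).
    apply sqrt_le_1_alt. rewrite S_INR. lra. }
  pose proof (pow_le (INR (S d)) n (pos_INR _)). pose proof (sqrt_pos (INR (S d))).
  replace (sqrt 2 * (INR (S d) ^ n * sqrt (INR (S d))))
    with (INR (S d) ^ n * (sqrt 2 * sqrt (INR (S d)))) by ring.
  replace (2 * 2 ^ n * (INR d ^ n * sqrt (INR d)))
    with ((2 ^ n * INR d ^ n) * (2 * sqrt (INR d))) by ring.
  apply Rmult_le_compat; try lra. apply Rmult_le_pos; apply sqrt_pos.
Qed.

Lemma cheb_coef_sqr_le (a b : nat -> R) (d : nat) :
  sup_norm_le (poly_eval a d) 1 ->
  (forall n, (n <= d)%nat -> a n = sum_f_R0 (fun m => b m * cheb m n) d) ->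
  sum_f_R0 (fun m => b m ^ 2) d <= 2.
Proof.
  intros HP Hb. apply sum_sqr_le_of_cheb_angle. intros j Hj.
  rewrite (sum_eq _ (fun m => b m * poly_eval (cheb m) d (cos (cheb_angle d j))))
    by (intros m Hm; rewrite poly_eval_cheb_cos by exact Hm; reflexivity).
  rewrite <- (poly_eval_lincomb a b cheb) by exact Hb. apply HP, COS_bound.
Qed.

Lemma high_part_le_cheb_coef (a b : nat -> R) (d k : nat) (x : R) :
  (S k <= d)%nat -> -1 <= x <= 1 ->
  (forall n, (n <= d)%nat -> a n = sum_f_R0 (fun m => b m * cheb m n) d) ->
  Rabs (high_part a d (S k) x)
  <= sum_f_R0 (fun m => Rabs (b m) * (2 ^ S k * INR (S (S k)) * INR (S m) ^ S k)) d.
Proof.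
  intros Hd Hx Hb. rewrite (high_part_lincomb a b cheb) by assumption.
  eapply Rle_trans; [apply sum_f_R0_triangle|].
  apply sum_Rle. intros m Hm. rewrite Rabs_mult, high_part_cheb_stable by exact Hm.
  apply Rmult_le_compat_l; [apply Rabs_pos | apply cheb_high_bound, Rabs_le; exact Hx].
Qed.

Theorem mainTheorem5 :
  forall k : nat, (1 <= k)%nat ->
  exists C : R,
    forall (d : nat) (a : nat -> R),
      (k <= d)%nat ->
      sup_norm_le (poly_eval a d) 1 ->
      sup_norm_le (high_part a d k) (C * INR d ^ k * sqrt (INR d)).
Proof.
  intros k Hk. destruct k as [|k]; [lia|].
  set (K := 2 ^ S k * INR (S (S k))).
  assert (HK : 0 < K) by (apply Rmult_lt_0_compat; [apply pow_lt; lra | apply lt_0_INR; lia]).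
  exists (2 * 2 ^ S k * K). intros d a Hd HP x Hx.
  destruct (cheb_expansion a d) as [b Hb].
  assert (Hcoef : sum_f_R0 (fun m => Rabs (b m) ^ 2) d <= sqrt 2 ^ 2).
  { rewrite pow2_sqrt, (sum_eq _ (fun m => b m ^ 2)) by (intros; try apply pow2_abs; lra).
    exact (cheb_coef_sqr_le a b d HP Hb). }
  eapply Rle_trans; [exact (high_part_le_cheb_coef a b d k x Hd Hx Hb)|].
  eapply Rle_trans.
  { apply (sum_f_R0_mul_le _ _ _ _ (K * INR (S d) ^ S k * sqrt (INR (S d))) Rlt_sqrt2_0);
      [| exact Hcoef | apply sum_sqr_pow_succ_le].
    apply Rmult_lt_0_compat; [apply Rmult_lt_0_compat; [exact HK | apply pow_lt, lt_0_INR; lia]|].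
    apply sqrt_lt_R0, lt_0_INR. lia. }
  replace (sqrt 2 * (K * INR (S d) ^ S k * sqrt (INR (S d))))
    with (K * (sqrt 2 * (INR (S d) ^ S k * sqrt (INR (S d))))) by ring.
  replace (2 * 2 ^ S k * K * INR d ^ S k * sqrt (INR d))
    with (K * (2 * 2 ^ S k * (INR d ^ S k * sqrt (INR d)))) by ring.
  apply Rmult_le_compat_l; [lra | apply sqrt2_succ_pow_le; lia].
Qed.
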